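(* There exists a countable, connected, locally finite graph $G$ with a vertex $v$ such that $G$ has 2-distinguishing density zero at $v$, but $G$ does not have 2-distinguishing density zero; in fact there is a vertex $v'$ of $G$ such that no 2-distinguishing coloring $l$ of $G$ satisfies $\delta_{v'}(l)=0$.
   Context: All graphs are simple with vertex set $V$; $d$ is the graph distance and $B_x(r)=\{y\in V: d(x,y)\le r\}$. A 2-coloring $l:V\to\{\text{blue},\text{red}\}$ is 2-distinguishing if the only automorphism $g$ of $G$ with $l(g(x))=l(x)$ for all $x$ is the identity. For $W\subseteq V$ and $x\in V$, $\delta_x(W):=\lim_{n\to\infty}\frac{|B_x(n)\cap W|}{|B_x(n)|}$ if the limit exists (finite/infinite $=0$, infinite/infinite undefined); if $\delta_x(W)$ exists for all $x$, $\delta(W):=\sup_x\delta_x(W)$. For a 2-coloring $l$ with color classes $V_{\text{blue}},V_{\text{red}}$: $\delta_x(l):=\min\{\delta_x(V_{\text{blue}}),\delta_x(V_{\text{red}})\}$, $\delta(l):=\min\{\delta(V_{\text{blue}}),\delta(V_{\text{red}})\}$. $G$ has 2-distinguishing density zero at $x$ if some 2-distinguishing coloring $l$ has $\delta_x(l)=0$, and has 2-distinguishing density zero if some 2-distinguishing coloring $l$ has $\delta(l)=0$. *)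

From Stdlib Require Import Reals List.
Open Scope R_scope.

Section Graphs.
Context {V : Type} (adj : V -> V -> Prop).

Definition simple_graph : Prop :=
  (forall x y, adj x y -> adj y x) /\ (forall x, ~ adj x x).

Definition countable_vertices : Prop :=
  exists f : V -> nat, forall x y, f x = f y -> x = y.

Inductive walk : nat -> V -> V -> Prop :=
| walk0 : forall x, walk 0 x x
| walkS : forall n x y z, walk n x y -> adj y z -> walk (S n) x z.

Definition connected : Prop := forall x y, exists n, walk n x y.

Definition locally_finite : Prop :=
  forall x, exists l : list V, forall y, adj x y -> In y l.

Definition ball (x : V) (r : nat) (y : V) : Prop :=
  exists k, (k <= r)%nat /\ walk k x y.

Definition automorphism (g : V -> V) : Prop :=
  (forall x y, g x = g y -> x = y) /\ (forall y, exists x, g x = y) /\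
  (forall x y, adj x y <-> adj (g x) (g y)).

Definition distinguishing (l : V -> bool) : Prop :=
  forall g, automorphism g -> (forall x, l (g x) = l x) -> forall x, g x = x.

End Graphs.

Definition is_card {V : Type} (P : V -> Prop) (k : nat) : Prop :=
  exists s : list V, NoDup s /\ (forall y, In y s <-> P y) /\ length s = k.

(* delta_x(W) exists and equals d (balls are finite here) *)
Definition density_at {V : Type} (adj : V -> V -> Prop) (x : V) (W : V -> Prop) (d : R) : Prop :=
  exists a b : nat -> nat,
    (forall n, is_card (ball adj x n) (b n)) /\
    (forall n, is_card (fun y => ball adj x n y /\ W y) (a n)) /\
    Un_cv (fun n => INR (a n) / INR (b n)) d.

Definition blue_class {V : Type} (l : V -> bool) : V -> Prop := fun y => l y = true.
Definition red_class {V : Type} (l : V -> bool) : V -> Prop := fun y => l y = false.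

Definition coloring_density_zero_at {V : Type} (adj : V -> V -> Prop) (x : V) (l : V -> bool) : Prop :=
  exists d1 d2, density_at adj x (blue_class l) d1 /\ density_at adj x (red_class l) d2 /\
    Rmin d1 d2 = 0.

Definition density {V : Type} (adj : V -> V -> Prop) (W : V -> Prop) (s : R) : Prop :=
  (forall x, exists d, density_at adj x W d) /\
  is_lub (fun r => exists x, density_at adj x W r) s.

Definition coloring_density_zero {V : Type} (adj : V -> V -> Prop) (l : V -> bool) : Prop :=
  exists s1 s2, density adj (blue_class l) s1 /\ density adj (red_class l) s2 /\ Rmin s1 s2 = 0.

Definition has_2dist_density_zero_at {V : Type} (adj : V -> V -> Prop) (x : V) : Prop :=
  exists l, distinguishing adj l /\ coloring_density_zero_at adj x l.

Definition has_2dist_density_zero {V : Type} (adj : V -> V -> Prop) : Prop :=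
  exists l, distinguishing adj l /\ coloring_density_zero adj l.

(* The graph is a two-way infinite path, the spine, with a simple ray attached along its
   negative half and a ladder (a ray whose vertices are doubled into pairs of twins with the
   same neighbours) along its positive half: the rays are cut into consecutive layers, layer l
   having roughly l! vertices, and spine vertex l+1 (resp. -(l+1)) is joined to every vertex of
   layer l of the ladder (resp. of the ray).  A ball of radius n around a spine vertex is then
   dominated by the outermost layer it meets, which lies on the ladder around vertex 1 and on
   the ray around vertex -1.

   Swapping two twins is an automorphism, so a distinguishing coloring gives twins different
   colors, and around vertex 1 each color class has density at least 1/4.  Coloring the
   nonpositive spine and one twin of each pair blue, the rest red, is distinguishing: the end
   of the ray is the only red vertex of degree at most 2, and from it every vertex is pinned
   down in turn as the unique vertex of some color adjacent to already fixed vertices.  Around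
   vertex -1 its blue class has density zero. *)

From Stdlib Require Import Reals List Lia Lra ZArith Arith ClassicalEpsilon FinFun.
Import ListNotations.
Local Open Scope nat_scope.

Section Graphs.
Context {V : Type} (adj : V -> V -> Prop).

Lemma walk_app n m x y z :
  walk adj n x y -> walk adj m y z -> walk adj (n + m) x z.
Proof.
  intros Hxy Hyz. induction Hyz as [|m y z w _ IH Hzw].
  - rewrite Nat.add_0_r. exact Hxy.
  - rewrite Nat.add_succ_r. econstructor; eauto.
Qed.

Lemma walk_one x y : adj x y -> walk adj 1 x y.
Proof. intros Hxy. econstructor; [constructor | exact Hxy]. Qed.

Lemma walk_sym : (forall x y, adj x y -> adj y x) ->
  forall n x y, walk adj n x y -> walk adj n y x.
Proof.
  intros Hsym n x y Hw. induction Hw as [x|n x y z _ IH Hyz].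
  - constructor.
  - replace (S n) with (1 + n) by lia.
    eapply walk_app; [apply walk_one, Hsym, Hyz | exact IH].
Qed.

Lemma walk_potential (phi : V -> Z) :
  (forall y z, adj y z -> (phi z <= phi y + 1)%Z) ->
  forall n x y, walk adj n x y -> (phi y <= phi x + Z.of_nat n)%Z.
Proof.
  intros Hphi n x y Hw. induction Hw as [x|n x y z _ IH Hyz].
  - lia.
  - specialize (Hphi _ _ Hyz). lia.
Qed.

Lemma automorphism_fixed_of_unique (g : V -> V) (Q : V -> Prop) z :
  automorphism adj g -> (forall w, Q w -> w = z \/ g w = w) -> Q (g z) -> g z = z.
Proof.
  intros [Hinj _] HQ Hgz. destruct (HQ _ Hgz) as [Hz | Hfix]; [exact Hz |].
  apply Hinj. exact Hfix.
Qed.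

Definition at_most_two_neighbours (x : V) : Prop :=
  forall y z w, adj x y -> adj x z -> adj x w -> y = z \/ y = w \/ z = w.

Lemma automorphism_at_most_two_neighbours g x :
  automorphism adj g -> at_most_two_neighbours x -> at_most_two_neighbours (g x).
Proof.
  intros (Hinj & Hsurj & Hadj) Hx y z w Hy Hz Hw.
  destruct (Hsurj y) as [y' <-], (Hsurj z) as [z' <-], (Hsurj w) as [w' <-].
  apply Hadj in Hy, Hz, Hw.
  destruct (Hx _ _ _ Hy Hz Hw) as [-> | [-> | ->]]; auto.
Qed.

End Graphs.

Section Cardinality.
Context {V : Type}.

Lemma is_card_of_list (P : V -> Prop) (L : list V) :
  (forall y, P y -> In y L) -> exists k, is_card P k.
Proof.
  revert P. induction L as [|a L IH]; intros P HL.
  - exists 0%nat, []. split; [constructor | split; [| reflexivity]].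
    intros y. split; [intros [] | intros Hy; exact (HL _ Hy)].
  - destruct (IH (fun y => P y /\ y <> a)) as [k (s & Hnd & Hs & Hlen)].
    { intros y [Py Hya]. destruct (HL y Py); [subst; tauto | assumption]. }
    destruct (classic (P a)) as [Pa | nPa].
    + exists (S k), (a :: s).
      split; [constructor; [rewrite Hs; tauto | exact Hnd] | split; [| simpl; congruence]].
      intros y. simpl. rewrite Hs.
      destruct (classic (y = a)) as [-> | Hya]; intuition congruence.
    + exists k, s. split; [exact Hnd | split; [| exact Hlen]].
      intros y. rewrite Hs. split; [tauto |].
      intros Py. split; [exact Py | intros ->; tauto].
Qed.

Lemma is_card_le_length (P : V -> Prop) k L :
  is_card P k -> (forall y, P y -> In y L) -> (k <= length L)%nat.
Proof.
  intros (s & Hnd & Hs & <-) HL. apply NoDup_incl_length; [exact Hnd |].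
  intros y Hy. apply HL, Hs, Hy.
Qed.

Lemma length_le_is_card (P : V -> Prop) k L :
  is_card P k -> NoDup L -> (forall y, In y L -> P y) -> (length L <= k)%nat.
Proof.
  intros (s & Hnd & Hs & <-) HndL HL. apply NoDup_incl_length; [exact HndL |].
  intros y Hy. apply Hs, HL, Hy.
Qed.

Lemma is_card_unique (P : V -> Prop) k k' : is_card P k -> is_card P k' -> k = k'.
Proof.
  intros Hk Hk'. destruct Hk' as (s & Hnd & Hs & <-).
  apply Nat.le_antisymm.
  - apply (is_card_le_length P); [exact Hk | apply Hs].
  - apply (length_le_is_card P); [exact Hk | exact Hnd | apply Hs].
Qed.

Lemma is_card_split (P : V -> Prop) (l : V -> bool) a b c :
  is_card P b -> is_card (fun y => P y /\ l y = true) a ->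
  is_card (fun y => P y /\ l y = false) c -> (a + c)%nat = b.
Proof.
  intros (s & Hnd & Hs & <-) Ha Hc. rewrite <- (filter_length l s). f_equal.
  - apply (is_card_unique _ _ _ Ha). exists (filter l s).
    split; [apply NoDup_filter, Hnd | split; [| reflexivity]].
    intros y. rewrite filter_In, Hs. tauto.
  - apply (is_card_unique _ _ _ Hc). exists (filter (fun y => negb (l y)) s).
    split; [apply NoDup_filter, Hnd | split; [| reflexivity]].
    intros y. rewrite filter_In, Hs, Bool.negb_true_iff. tauto.
Qed.

End Cardinality.

Section Limits.
Local Open Scope R_scope.

Lemma Un_cv_const c : Un_cv (fun _ => c) c.
Proof. intros eps Heps. exists 0%nat. intros n _. rewrite R_dist_eq. exact Heps. Qed.

Lemma Un_cv_div_succ c : Un_cv (fun n => c / (INR n + 1)) 0.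
Proof.
  rewrite <- (Rmult_0_r c).
  apply (Un_cv_ext (fun n => c * RinvN n)); [reflexivity |].
  apply CV_mult; [apply Un_cv_const | apply RinvN_cv].
Qed.

Lemma Un_cv_squeeze_0 (u v : nat -> R) N :
  (forall n, (N <= n)%nat -> 0 <= u n <= v n) -> Un_cv v 0 -> Un_cv u 0.
Proof.
  intros Huv Hv eps Heps. destruct (Hv eps Heps) as [M HM]. exists (max N M).
  intros n Hn. specialize (Huv n ltac:(lia)). specialize (HM n ltac:(lia)).
  unfold R_dist in *. rewrite Rminus_0_r in *.
  rewrite Rabs_right in HM by lra. rewrite Rabs_right by lra. lra.
Qed.

Lemma Un_cv_ge_eventually (u : nat -> R) l c N :
  Un_cv u l -> (forall n, (N <= n)%nat -> c <= u n) -> c <= l.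
Proof.
  intros Hu Hc. destruct (Rle_or_lt c l) as [Hle | Hlt]; [exact Hle |].
  destruct (Hu (c - l)) as [M HM]; [lra |].
  specialize (HM (max N M) ltac:(lia)). specialize (Hc (max N M) ltac:(lia)).
  unfold R_dist in HM. apply Rabs_def2 in HM. lra.
Qed.

Lemma INR_ratio_le a b p q : (0 < b)%nat -> (0 < q)%nat -> (a * q <= p * b)%nat ->
  INR a / INR b <= INR p / INR q.
Proof.
  intros Hb Hq H. apply lt_0_INR in Hb, Hq. apply le_INR in H. rewrite !mult_INR in H.
  apply Rmult_le_reg_r with (INR b * INR q); [nra |].
  replace (INR a / INR b * (INR b * INR q)) with (INR a * INR q) by (field; lra).
  replace (INR p / INR q * (INR b * INR q)) with (INR p * INR b) by (field; lra).
  exact H.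
Qed.

End Limits.
Fixpoint layer_start (l : nat) : nat :=
  match l with 0 => 0 | S l' => S l' * (layer_start l' + 1) end.

Definition in_layer (k l : nat) : Prop := layer_start l <= k < layer_start (S l).

Lemma layer_start_succ_gt l : layer_start l < layer_start (S l).
Proof. simpl. nia. Qed.

Lemma layer_start_le l l' : l <= l' -> layer_start l <= layer_start l'.
Proof.
  induction 1 as [|l' _ IH]; [reflexivity |].
  pose proof (layer_start_succ_gt l'). lia.
Qed.

Lemma le_layer_start l : l <= layer_start l.
Proof. induction l as [|l IH]; simpl; nia. Qed.

Lemma in_layer_exists k : exists l, in_layer k l.
Proof.
  assert (Hbound : forall m, k < layer_start m -> exists l, in_layer k l).
  { induction m as [|m IH]; simpl; intros Hk; [lia |].
    destruct (le_lt_dec (layer_start m) k) as [Hm | Hm]; [| exact (IH Hm)].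
    exists m. unfold in_layer. simpl. lia. }
  apply (Hbound (S k)). pose proof (le_layer_start (S k)). lia.
Qed.

Definition layer (k : nat) : nat :=
  proj1_sig (constructive_indefinite_description _ (in_layer_exists k)).

Lemma in_layer_layer k : in_layer k (layer k).
Proof. exact (proj2_sig (constructive_indefinite_description _ (in_layer_exists k))). Qed.

Lemma layer_lt_iff k n : layer k < n <-> k < layer_start n.
Proof.
  destruct (in_layer_layer k) as [Hlo Hhi]. split; intros H.
  - pose proof (layer_start_le (S (layer k)) n H). lia.
  - destruct (le_lt_dec n (layer k)) as [Hn | Hn]; [| exact Hn].
    pose proof (layer_start_le _ _ Hn). lia.
Qed.

Lemma layer_unique k l : in_layer k l -> layer k = l.
Proof.
  intros [Hlo Hhi]. apply Nat.le_antisymm.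
  - apply Nat.lt_succ_r, layer_lt_iff, Hhi.
  - destruct (le_lt_dec l (layer k)) as [Hl | Hl]; [exact Hl |].
    apply layer_lt_iff in Hl. pose proof (layer_start_le _ _ Hl). lia.
Qed.

Lemma layer_succ k : layer (S k) = layer k \/ layer (S k) = S (layer k).
Proof.
  destruct (in_layer_layer k) as [Hlo Hhi].
  assert (Hge : layer k <= layer (S k)).
  { destruct (le_lt_dec (layer k) (layer (S k))) as [H | H]; [exact H |].
    apply layer_lt_iff in H. lia. }
  assert (Hlt : layer (S k) < S (S (layer k))).
  { apply layer_lt_iff. pose proof (layer_start_succ_gt (S (layer k))). lia. }
  lia.
Qed.

Lemma layer_of_start l : layer (layer_start l) = l.
Proof. apply layer_unique. split; [lia | apply layer_start_succ_gt]. Qed.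

Lemma layer_zero : layer 0 = 0.
Proof. exact (layer_of_start 0). Qed.

Lemma layer_of_start_succ l : 1 <= l -> layer (S (layer_start l)) = l.
Proof. intros Hl. apply layer_unique. split; [lia |]. simpl. nia. Qed.

Inductive vertex := Spine (z : Z) | Ladder (k : nat) (b : bool) | Ray (k : nat).

Definition edge (x y : vertex) : Prop :=
  match x, y with
  | Spine z, Spine w => w = (z + 1)%Z \/ z = (w + 1)%Z
  | Spine z, Ladder k _ | Ladder k _, Spine z => z = (Z.of_nat (layer k) + 1)%Z
  | Spine z, Ray k | Ray k, Spine z => z = (- (Z.of_nat (layer k) + 1))%Z
  | Ladder k _, Ladder k' _ | Ray k, Ray k' => k' = S k \/ k = S k'
  | _, _ => False
  end.

Lemma edge_sym x y : edge x y -> edge y x.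
Proof. destruct x, y; simpl; intros; try tauto; lia. Qed.

Lemma edge_simple : simple_graph edge.
Proof. split; [exact edge_sym | intros []; simpl; lia]. Qed.

Definition spine_pos (x : vertex) : Z :=
  match x with
  | Spine z => z
  | Ladder k _ => Z.of_nat (layer k) + 1
  | Ray k => - (Z.of_nat (layer k) + 1)
  end.

Definition spine_dist (p : Z) (x : vertex) : Z :=
  Z.abs (spine_pos x - p) + match x with Spine _ => 0 | _ => 1 end.

Lemma spine_dist_edge p x y : edge x y -> (spine_dist p y <= spine_dist p x + 1)%Z.
Proof.
  unfold spine_dist. pose proof layer_succ as Hsucc.
  destruct x as [z|k b|k], y as [w|k' b'|k']; simpl; intros E; try tauto; try lia.
  (* the remaining cases are two consecutive ladder or ray vertices *)
  all: destruct E as [-> | ->]; [pose proof (Hsucc k) | pose proof (Hsucc k')]; lia.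
Qed.

Lemma walk_spine z d : walk edge d (Spine z) (Spine (z + Z.of_nat d)).
Proof.
  induction d as [|d IH].
  - rewrite Z.add_0_r. constructor.
  - econstructor; [exact IH | simpl; lia].
Qed.

Lemma walk_spine_abs z w : walk edge (Z.abs_nat (w - z)) (Spine z) (Spine w).
Proof.
  destruct (Z.le_ge_cases z w) as [Hzw | Hzw].
  - replace (Spine w) with (Spine (z + Z.of_nat (Z.abs_nat (w - z)))) by (f_equal; lia).
    apply walk_spine.
  - apply (walk_sym _ edge_sym).
    replace (Spine z) with (Spine (w + Z.of_nat (Z.abs_nat (w - z)))) by (f_equal; lia).
    apply walk_spine.
Qed.

Lemma walk_from_spine p x : walk edge (Z.to_nat (spine_dist p x)) (Spine p) x.
Proof.
  unfold spine_dist. destruct x as [z|k b|k]; simpl.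
  - replace (Z.to_nat _) with (Z.abs_nat (z - p)) by lia. apply walk_spine_abs.
  - replace (Z.to_nat _) with (Z.abs_nat (Z.of_nat (layer k) + 1 - p) + 1) by lia.
    eapply walk_app; [apply walk_spine_abs | apply walk_one; reflexivity].
  - replace (Z.to_nat _) with (Z.abs_nat (- (Z.of_nat (layer k) + 1) - p) + 1) by lia.
    eapply walk_app; [apply walk_spine_abs | apply walk_one; reflexivity].
Qed.

Lemma ball_spine_iff p n x : ball edge (Spine p) n x <-> (spine_dist p x <= Z.of_nat n)%Z.
Proof.
  split.
  - intros (m & Hm & Hw).
    assert (Hp : spine_dist p (Spine p) = 0%Z) by (unfold spine_dist; simpl; lia).
    pose proof (walk_potential edge (spine_dist p) (spine_dist_edge p) _ _ _ Hw). lia.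
  - intros Hx. exists (Z.to_nat (spine_dist p x)). split; [lia | apply walk_from_spine].
Qed.

Lemma edge_connected : connected edge.
Proof.
  intros x y. exists (Z.to_nat (spine_dist 0 x) + Z.to_nat (spine_dist 0 y)).
  eapply walk_app; [apply (walk_sym _ edge_sym) | ]; apply walk_from_spine.
Qed.

Definition vertex_code (x : vertex) : nat :=
  match x with
  | Spine z => 3 * (2 * Z.abs_nat z + if (z <? 0)%Z then 1 else 0)
  | Ladder k b => 3 * (2 * k + if b then 1 else 0) + 1
  | Ray k => 3 * k + 2
  end.

Lemma vertex_countable : countable_vertices (V := vertex).
Proof.
  exists vertex_code. intros [z|k b|k] [w|k' b'|k']; simpl; intros H; try lia.
  - f_equal. destruct (Z.ltb_spec z 0), (Z.ltb_spec w 0); lia.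
  - destruct b, b'; f_equal; lia.
  - f_equal. lia.
Qed.

Definition spine_segment (c : Z) (r : nat) : list vertex :=
  map (fun i => Spine (c - Z.of_nat r + Z.of_nat i)) (seq 0 (2 * r + 1)).

Definition ladder_side (b : bool) (m : nat) : list vertex := map (fun k => Ladder k b) (seq 0 m).

Definition ray_prefix (m : nat) : list vertex := map Ray (seq 0 m).

Definition ball_cover (p : Z) (n : nat) : list vertex :=
  let m := layer_start (n + Z.abs_nat p - 1) in
  spine_segment p n ++ ladder_side true m ++ ladder_side false m ++ ray_prefix m.

Lemma in_spine_segment c r z :
  (Z.abs (z - c) <= Z.of_nat r)%Z -> In (Spine z) (spine_segment c r).
Proof.
  intros H. apply in_map_iff. exists (Z.to_nat (z - c + Z.of_nat r)).
  split; [f_equal; lia | apply in_seq; lia].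
Qed.

Lemma in_ladder_side b m k : k < m -> In (Ladder k b) (ladder_side b m).
Proof. intros H. apply in_map_iff. exists k. split; [reflexivity | apply in_seq; lia]. Qed.

Lemma in_ray_prefix m y : In y (ray_prefix m) <-> exists k, y = Ray k /\ k < m.
Proof.
  unfold ray_prefix. rewrite in_map_iff.
  split; intros (k & Hk & Hm); exists k; rewrite in_seq in *; split; auto; lia.
Qed.

Lemma length_spine_segment c r : length (spine_segment c r) = 2 * r + 1.
Proof. unfold spine_segment. rewrite length_map, length_seq. reflexivity. Qed.

Lemma length_ladder_side b m : length (ladder_side b m) = m.
Proof. unfold ladder_side. rewrite length_map, length_seq. reflexivity. Qed.

Lemma length_ray_prefix m : length (ray_prefix m) = m.
Proof. unfold ray_prefix. rewrite length_map, length_seq. reflexivity. Qed.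

Lemma length_ball_cover p n :
  length (ball_cover p n) = 2 * n + 1 + 3 * layer_start (n + Z.abs_nat p - 1).
Proof.
  unfold ball_cover. rewrite !length_app, length_spine_segment, !length_ladder_side,
    length_ray_prefix. lia.
Qed.

Lemma ball_in_cover p n x : ball edge (Spine p) n x -> In x (ball_cover p n).
Proof.
  rewrite ball_spine_iff. unfold ball_cover, spine_dist.
  destruct x as [z|k b|k]; simpl; intros Hx; rewrite !in_app_iff.
  - left. apply in_spine_segment. lia.
  - assert (Hk : k < layer_start (n + Z.abs_nat p - 1)) by (apply layer_lt_iff; lia).
    destruct b; [right; left | right; right; left]; apply in_ladder_side, Hk.
  - assert (Hk : k < layer_start (n + Z.abs_nat p - 1)) by (apply layer_lt_iff; lia).
    right; right; right. apply in_ray_prefix. eauto.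
Qed.

Lemma edge_locally_finite : locally_finite edge.
Proof.
  (* every neighbour of [x] is within distance 2 of the spine vertex [spine_pos x] *)
  intros x. exists (ball_cover (spine_pos x) 2). intros y Hxy. apply ball_in_cover.
  apply ball_spine_iff. pose proof (spine_dist_edge (spine_pos x) x y Hxy).
  unfold spine_dist in *. destruct x; simpl in *; lia.
Qed.

Definition witness_coloring (x : vertex) : bool :=
  match x with Spine z => (z <=? 0)%Z | Ladder _ b => b | Ray _ => false end.

Lemma ray_zero_at_most_two_neighbours : at_most_two_neighbours edge (Ray 0).
Proof.
  assert (Hnb : forall y, edge (Ray 0) y -> y = Ray 1 \/ y = Spine (-1)).
  { intros [z|k b|k]; simpl; rewrite ?layer_zero; intros E; [right | tauto | left]; f_equal; lia. }
  intros y z w Hy Hz Hw.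
  destruct (Hnb _ Hy) as [-> | ->], (Hnb _ Hz) as [-> | ->], (Hnb _ Hw) as [-> | ->]; auto.
Qed.

Lemma red_at_most_two_neighbours x :
  witness_coloring x = false -> at_most_two_neighbours edge x -> x = Ray 0.
Proof.
  intros Hred Hdeg. destruct x as [z|k b|[|k]]; simpl in Hred; [| subst b | reflexivity |].
  - apply Z.leb_gt in Hred.
    assert (Hz : edge (Spine z) (Ladder (layer_start (Z.to_nat (z - 1))) true)).
    { simpl. rewrite layer_of_start. lia. }
    assert (Hup : edge (Spine z) (Spine (z + 1))) by (simpl; lia).
    assert (Hdown : edge (Spine z) (Spine (z - 1))) by (simpl; lia).
    destruct (Hdeg _ _ _ Hup Hdown Hz) as [E | [E | E]]; try discriminate.
    injection E. lia.
  - assert (Hz : edge (Ladder k false) (Spine (Z.of_nat (layer k) + 1))) by reflexivity.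
    assert (Ht : edge (Ladder k false) (Ladder (S k) true)) by (simpl; lia).
    assert (Hf : edge (Ladder k false) (Ladder (S k) false)) by (simpl; lia).
    destruct (Hdeg _ _ _ Ht Hf Hz) as [E | [E | E]]; discriminate.
  - assert (Hz : edge (Ray (S k)) (Spine (- (Z.of_nat (layer (S k)) + 1)))) by reflexivity.
    assert (Hup : edge (Ray (S k)) (Ray (S (S k)))) by (simpl; lia).
    assert (Hdown : edge (Ray (S k)) (Ray k)) by (simpl; lia).
    destruct (Hdeg _ _ _ Hup Hdown Hz) as [E | [E | E]]; try discriminate.
    injection E. lia.
Qed.

Section WitnessRigid.
Variable g : vertex -> vertex.
Hypothesis g_aut : automorphism edge g.
Hypothesis g_col : forall x, witness_coloring (g x) = witness_coloring x.

Lemma fixed_of_common_neighbour a a' c z :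
  g a = a -> g a' = a' -> edge a z -> edge a' z -> witness_coloring z = c ->
  (forall w, edge a w -> edge a' w -> witness_coloring w = c -> w = z \/ g w = w) ->
  g z = z.
Proof.
  intros Ha Ha' Haz Ha'z Hz Huniq. destruct g_aut as (_ & _ & Hedge).
  apply (automorphism_fixed_of_unique edge g
    (fun w => edge a w /\ edge a' w /\ witness_coloring w = c)); [exact g_aut | |].
  - intros w (H1 & H2 & H3). exact (Huniq w H1 H2 H3).
  - split; [| split].
    + rewrite <- Ha. apply (Hedge a z), Haz.
    + rewrite <- Ha'. apply (Hedge a' z), Ha'z.
    + rewrite g_col. exact Hz.
Qed.

Lemma ray_fixed k : g (Ray k) = Ray k.
Proof.
  induction k as [[|k] IH] using lt_wf_ind.
  - apply red_at_most_two_neighbours; [rewrite g_col; reflexivity |].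
    apply automorphism_at_most_two_neighbours; [exact g_aut |].
    exact ray_zero_at_most_two_neighbours.
  - apply (fixed_of_common_neighbour (Ray k) (Ray k) false);
      [(apply IH; lia) .. | simpl; lia | simpl; lia | reflexivity |].
    intros [w|j b|j] E _ C; simpl in E, C.
    + apply Z.leb_gt in C. lia.
    + contradiction.
    + destruct E as [-> | ->]; [left; reflexivity | right; apply IH; lia].
Qed.

Lemma negative_spine_fixed z : (z <= -1)%Z -> g (Spine z) = Spine z.
Proof.
  intros Hz. set (l := Z.to_nat (- z - 1)).
  apply (fixed_of_common_neighbour (Ray (layer_start l)) (Ray (layer_start l)) true).
  1, 2: apply ray_fixed.
  1, 2: simpl; rewrite layer_of_start; lia.
  - simpl. apply Z.leb_le. lia.
  - intros [w|j b|j] E _ C; simpl in E, C; [| contradiction | discriminate].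
    left. rewrite layer_of_start in E. f_equal. lia.
Qed.

Lemma spine_zero_fixed : g (Spine 0) = Spine 0.
Proof.
  apply (fixed_of_common_neighbour (Spine (-1)) (Spine (-1)) true);
    [(apply negative_spine_fixed; lia) .. | simpl; lia | simpl; lia | reflexivity |].
  intros [w|j b|j] E _ C; simpl in E, C; [| lia | discriminate].
  destruct E as [E | E]; [left; f_equal; lia | right; apply negative_spine_fixed; lia].
Qed.

Lemma spine_one_fixed : g (Spine 1) = Spine 1.
Proof.
  apply (fixed_of_common_neighbour (Spine 0) (Spine 0) false);
    [apply spine_zero_fixed .. | simpl; lia | simpl; lia | reflexivity |].
  intros [w|j b|j] E _ C; simpl in E, C; [| lia | lia].
  apply Z.leb_gt in C. left. f_equal. lia.
Qed.

Lemma ladder_true_fixed k : g (Ladder k true) = Ladder k true.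
Proof.
  induction k as [[|k] IH] using lt_wf_ind.
  - apply (fixed_of_common_neighbour (Spine 1) (Spine 1) true);
        [apply spine_one_fixed .. | | | reflexivity |].
    1, 2: simpl; rewrite layer_zero; lia.
    intros [w|j b|j] E _ C; simpl in E, C; [| subst b | lia].
    + destruct E as [E | E]; [apply Z.leb_le in C; lia | right].
      replace w with 0%Z by lia. apply spine_zero_fixed.
    + assert (Hj : j < layer_start 1) by (apply layer_lt_iff; lia).
      left. simpl in Hj. f_equal. lia.
  - apply (fixed_of_common_neighbour (Ladder k true) (Ladder k true) true);
      [(apply IH; lia) .. | simpl; lia | simpl; lia | reflexivity |].
    intros [w|j b|j] E _ C; simpl in E, C; [| subst b | contradiction].
    + apply Z.leb_le in C. lia.
    + destruct E as [-> | ->]; [left; reflexivity | right; apply IH; lia].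
Qed.

Lemma positive_spine_fixed z : (2 <= z)%Z -> g (Spine z) = Spine z.
Proof.
  intros Hz. set (l := Z.to_nat (z - 1)). assert (Hl : 1 <= l) by lia.
  apply (fixed_of_common_neighbour (Ladder (layer_start l) true)
    (Ladder (S (layer_start l)) true) false); [apply ladder_true_fixed .. | | | |].
  - simpl. rewrite layer_of_start. lia.
  - simpl. rewrite layer_of_start_succ by exact Hl. lia.
  - simpl. apply Z.leb_gt. lia.
  - intros [w|j b|j] E1 E2 _; simpl in E1, E2; [| lia | contradiction].
    left. rewrite layer_of_start in E1. f_equal. lia.
Qed.

Lemma spine_fixed z : g (Spine z) = Spine z.
Proof.
  destruct (Z_lt_le_dec z 0) as [Hz | Hz]; [apply negative_spine_fixed; lia |].
  destruct (Z.eq_dec z 0) as [-> | H0]; [exact spine_zero_fixed |].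
  destruct (Z.eq_dec z 1) as [-> | H1]; [exact spine_one_fixed |].
  apply positive_spine_fixed. lia.
Qed.

Lemma ladder_false_succ_fixed j : g (Ladder (S j) false) = Ladder (S j) false.
Proof.
  apply (fixed_of_common_neighbour (Ladder j true) (Ladder (S (S j)) true) false);
    [apply ladder_true_fixed .. | simpl; lia | simpl; lia | reflexivity |].
  intros [w|i b|i] E1 E2 C; simpl in E1, E2, C; [right; apply spine_fixed | subst b | contradiction].
  left. f_equal. lia.
Qed.

Lemma ladder_false_zero_fixed : g (Ladder 0 false) = Ladder 0 false.
Proof.
  apply (fixed_of_common_neighbour (Ladder 1 true) (Ladder 1 true) false);
    [apply ladder_true_fixed .. | simpl; lia | simpl; lia | reflexivity |].
  intros [w|i b|i] E _ C; simpl in E, C; [right; apply spine_fixed | subst b | contradiction].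
  destruct E as [-> | E]; [right; apply ladder_false_succ_fixed | left; f_equal; lia].
Qed.

Lemma witness_rigid x : g x = x.
Proof.
  destruct x as [z|[|k] []|k].
  - apply spine_fixed.
  - apply ladder_true_fixed.
  - apply ladder_false_zero_fixed.
  - apply ladder_true_fixed.
  - apply ladder_false_succ_fixed.
  - apply ray_fixed.
Qed.

End WitnessRigid.

Lemma witness_distinguishing : distinguishing edge witness_coloring.
Proof. intros g Hg Hcol x. exact (witness_rigid g Hg Hcol x). Qed.

Definition swap_twins (k : nat) (x : vertex) : vertex :=
  match x with Ladder j b => if Nat.eqb j k then Ladder j (negb b) else x | _ => x end.

Lemma swap_twins_involutive k x : swap_twins k (swap_twins k x) = x.
Proof.
  destruct x as [|j b|]; simpl; [reflexivity | | reflexivity].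
  destruct (Nat.eqb_spec j k); simpl; [rewrite Bool.negb_involutive |];
    destruct (Nat.eqb_spec j k); tauto.
Qed.

Lemma swap_twins_automorphism k : automorphism edge (swap_twins k).
Proof.
  split; [| split].
  - intros x y H. rewrite <- (swap_twins_involutive k x), H. apply swap_twins_involutive.
  - intros y. exists (swap_twins k y). apply swap_twins_involutive.
  - intros [] []; simpl; repeat destruct (Nat.eqb _ _); simpl; tauto.
Qed.

Lemma distinguishing_separates_twins l :
  distinguishing edge l -> forall k, l (Ladder k true) <> l (Ladder k false).
Proof.
  intros Hl k E.
  assert (Hfix : swap_twins k (Ladder k true) = Ladder k true).
  { apply Hl; [apply swap_twins_automorphism |].
    intros [|j b|]; simpl; [reflexivity | | reflexivity].
    destruct (Nat.eqb_spec j k) as [-> |]; [destruct b; simpl; congruence | reflexivity]. }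
  simpl in Hfix. rewrite Nat.eqb_refl in Hfix. discriminate.
Qed.

Definition twin_of_color (l : vertex -> bool) (c : bool) (k : nat) : vertex :=
  if Bool.eqb (l (Ladder k true)) c then Ladder k true else Ladder k false.

Lemma twin_of_color_spec l c k :
  distinguishing edge l -> l (twin_of_color l c k) = c.
Proof.
  intros Hl. pose proof (distinguishing_separates_twins l Hl k). unfold twin_of_color.
  destruct (Bool.eqb_spec (l (Ladder k true)) c); [assumption |].
  destruct (l (Ladder k true)), (l (Ladder k false)), c; congruence.
Qed.

Lemma twin_of_color_injective l c : Injective (twin_of_color l c).
Proof.
  intros j k. unfold twin_of_color.
  destruct (Bool.eqb _ c), (Bool.eqb _ c); intros E; injection E; tauto.
Qed.

Lemma ball_card_seq p (P : nat -> vertex -> Prop) :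
  (forall n y, P n y -> ball edge (Spine p) n y) -> exists a, forall n, is_card (P n) (a n).
Proof.
  intros HP. apply (choice (fun n k => is_card (P n) k)). intros n.
  apply (is_card_of_list _ (ball_cover p n)). intros y Hy. apply ball_in_cover, (HP n), Hy.
Qed.

Lemma ball_card_pos p n b : is_card (ball edge (Spine p) n) b -> 0 < b.
Proof.
  intros Hb. apply (length_le_is_card _ _ [Spine p] Hb); [repeat constructor; auto |].
  intros y [<- | []]. apply ball_spine_iff. unfold spine_dist. simpl. lia.
Qed.

Lemma layer_start_growth n :
  2 <= n -> (2 * n + 1 + layer_start (n - 2)) * S n <= 4 * layer_start n.
Proof.
  intros Hn. destruct n as [|[|m]]; [lia .. |]. replace (S (S m) - 2) with m by lia.
  simpl. nia.
Qed.

Lemma layer_start_ge n : 4 <= n -> 2 * n + 1 <= layer_start n.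
Proof.
  intros Hn. destruct n as [|[|[|[|m]]]]; [lia .. |].
  pose proof (le_layer_start m). simpl. nia.
Qed.

Lemma witness_blue_in_ball n y :
  ball edge (Spine (-1)) n y -> witness_coloring y = true ->
  In y (spine_segment (-1) n ++ ladder_side true (layer_start (n - 2))).
Proof.
  rewrite ball_spine_iff. unfold spine_dist.
  destruct y as [z|k b|k]; simpl; intros Hy Hb; rewrite in_app_iff; [| subst b | discriminate].
  - left. apply in_spine_segment. lia.
  - right. apply in_ladder_side, layer_lt_iff. lia.
Qed.

Lemma witness_blue_ratio n a b :
  2 <= n -> is_card (ball edge (Spine (-1)) n) b ->
  is_card (fun y => ball edge (Spine (-1)) n y /\ blue_class witness_coloring y) a ->
  (INR a / INR b <= 4 / (INR n + 1))%R.
Proof.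
  intros Hn Hb Ha.
  assert (Ha_le : a <= 2 * n + 1 + layer_start (n - 2)).
  { replace (2 * n + 1 + layer_start (n - 2))
      with (length (spine_segment (-1) n ++ ladder_side true (layer_start (n - 2))))
      by (rewrite length_app, length_spine_segment, length_ladder_side; reflexivity).
    apply (is_card_le_length _ _ _ Ha). intros y [Hy Hc]. apply witness_blue_in_ball; assumption. }
  assert (Hb_ge : layer_start n <= b).
  { rewrite <- (length_ray_prefix (layer_start n)). apply (length_le_is_card _ _ _ Hb).
    - apply Injective_map_NoDup; [intros j k E; injection E; tauto | apply seq_NoDup].
    - intros y Hy. apply in_ray_prefix in Hy. destruct Hy as (k & -> & Hk).
      apply ball_spine_iff. apply layer_lt_iff in Hk. unfold spine_dist. simpl. lia. }
  replace (4 / (INR n + 1))%R with (INR 4 / INR (S n))%R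
    by (replace (INR 4) with 4%R by (simpl; ring); rewrite S_INR; reflexivity).
  apply INR_ratio_le; [exact (ball_card_pos _ _ _ Hb) | lia |].
  pose proof (layer_start_growth n Hn). nia.
Qed.

Lemma witness_density_zero : coloring_density_zero_at edge (Spine (-1)) witness_coloring.
Proof.
  destruct (ball_card_seq (-1) (fun n => ball edge (Spine (-1)) n)) as [b Hb]; [auto |].
  destruct (ball_card_seq (-1)
    (fun n y => ball edge (Spine (-1)) n y /\ blue_class witness_coloring y)) as [a Ha];
    [tauto |].
  destruct (ball_card_seq (-1)
    (fun n y => ball edge (Spine (-1)) n y /\ red_class witness_coloring y)) as [c Hc];
    [tauto |].
  assert (Hblue : Un_cv (fun n => INR (a n) / INR (b n))%R 0%R).
  { apply (Un_cv_squeeze_0 _ (fun n => 4 / (INR n + 1))%R 2); [| apply Un_cv_div_succ].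
    intros n Hn. split; [| exact (witness_blue_ratio n _ _ Hn (Hb n) (Ha n))].
    apply Rle_mult_inv_pos; [apply pos_INR | apply lt_0_INR, (ball_card_pos _ _ _ (Hb n))]. }
  assert (Hred : Un_cv (fun n => INR (c n) / INR (b n))%R 1%R).
  { pose proof (CV_minus _ _ _ _ (Un_cv_const 1%R) Hblue) as H. rewrite Rminus_0_r in H.
    apply (Un_cv_ext _ _ ltac:(intros n; reflexivity)) in H.
    refine (Un_cv_ext _ _ _ _ H). intros n.
    pose proof (ball_card_pos _ _ _ (Hb n)) as Hpos.
    rewrite <- (is_card_split _ _ _ _ _ (Hb n) (Ha n) (Hc n)) in Hpos |- *.
    rewrite plus_INR. apply lt_0_INR in Hpos. rewrite plus_INR in Hpos. field. lra. }
  exists 0%R, 1%R. split; [| split].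
  - exists a, b. auto.
  - exists c, b. auto.
  - unfold Rmin. destruct (Rle_dec 0 1); lra.
Qed.

Lemma twin_ball_ratio l c n a b :
  distinguishing edge l -> 4 <= n -> is_card (ball edge (Spine 1) n) b ->
  is_card (fun y => ball edge (Spine 1) n y /\ l y = c) a -> (1 / 4 <= INR a / INR b)%R.
Proof.
  intros Hl Hn Hb Ha.
  assert (Hb_le : b <= 2 * n + 1 + 3 * layer_start n).
  { replace (layer_start n) with (layer_start (n + Z.abs_nat 1 - 1)) by (f_equal; lia).
    rewrite <- length_ball_cover. apply (is_card_le_length _ _ _ Hb), ball_in_cover. }
  assert (Ha_ge : layer_start n <= a).
  { replace (layer_start n) with (length (map (twin_of_color l c) (seq 0 (layer_start n))))
      by (rewrite length_map, length_seq; reflexivity).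
    apply (length_le_is_card _ _ _ Ha).
    - apply Injective_map_NoDup; [apply twin_of_color_injective | apply seq_NoDup].
    - intros y Hy. apply in_map_iff in Hy. destruct Hy as (k & <- & Hk). apply in_seq in Hk.
      split; [| apply twin_of_color_spec, Hl].
      apply ball_spine_iff. assert (Hlt : layer k < n) by (apply layer_lt_iff; lia).
      unfold twin_of_color, spine_dist. destruct (Bool.eqb _ c); simpl; lia. }
  replace (1 / 4)%R with (INR 1 / INR 4)%R by (replace (INR 4) with 4%R by (simpl; ring); reflexivity).
  apply INR_ratio_le; [lia | exact (ball_card_pos _ _ _ Hb) |].
  pose proof (layer_start_ge n Hn). lia.
Qed.

Lemma distinguishing_density_ge l c d :
  distinguishing edge l -> density_at edge (Spine 1) (fun y => l y = c) d -> (1 / 4 <= d)%R.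
Proof.
  intros Hl (a & b & Hb & Ha & Hcv).
  apply (Un_cv_ge_eventually _ _ _ 4 Hcv). intros n Hn.
  exact (twin_ball_ratio l c n (a n) (b n) Hl Hn (Hb n) (Ha n)).
Qed.

Theorem mainTheorem2 :
  exists (V : Type) (adj : V -> V -> Prop),
    simple_graph adj /\ countable_vertices (V:=V) /\ connected adj /\ locally_finite adj /\
    (exists v : V, has_2dist_density_zero_at adj v) /\
    ~ has_2dist_density_zero adj /\
    (exists v' : V, forall l : V -> bool,
        distinguishing adj l -> ~ coloring_density_zero_at adj v' l).
Proof.
  exists vertex, edge.
  split; [exact edge_simple |]. split; [exact vertex_countable |].
  split; [exact edge_connected |]. split; [exact edge_locally_finite |].
  split; [exists (Spine (-1)), witness_coloring;
          split; [exact witness_distinguishing | exact witness_density_zero] |].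
  split.
  - intros (l & Hl & s1 & s2 & [Hex1 Hlub1] & [Hex2 Hlub2] & Hmin).
    destruct (Hex1 (Spine 1)) as [d1 Hd1], (Hex2 (Spine 1)) as [d2 Hd2].
    pose proof (distinguishing_density_ge l true d1 Hl Hd1).
    pose proof (distinguishing_density_ge l false d2 Hl Hd2).
    assert (d1 <= s1)%R by (apply Hlub1; exists (Spine 1); exact Hd1).
    assert (d2 <= s2)%R by (apply Hlub2; exists (Spine 1); exact Hd2).
    unfold Rmin in Hmin. destruct (Rle_dec s1 s2); lra.
  - exists (Spine 1). intros l Hl (d1 & d2 & Hd1 & Hd2 & Hmin).
    pose proof (distinguishing_density_ge l true d1 Hl Hd1).
    pose proof (distinguishing_density_ge l false d2 Hl Hd2).
    unfold Rmin in Hmin. destruct (Rle_dec d1 d2); lra.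
Qed.
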